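(* If $\gcd(A^3,B^2)=S(x,y)$, then $\gcd(f^3,g^2)=S(t,1)$.
   Context: Fix $\upsilon\in\{1,2\}$ and positive integers $m,\tau$ with $m=1$ or $\upsilon\tau=1$. Let $f,g\in\mathbb{Z}[t]$ with $4f^3+27g^2\ne0$, no common real root, and $\max\{\frac12\deg f,\frac13\deg g\}=\frac{2m}{\upsilon\tau}$. Let $\varsigma=2m$ if $\upsilon=1$, $\varsigma=1$ if $\upsilon=2$; $A(x,y)=y^{2\varsigma}f(x/y^\tau)$, $B(x,y)=y^{3\varsigma}g(x/y^\tau)\in\mathbb{Z}[x,y]$. For polynomials $F,G$ (in any number of variables), $\gcd(F,G)$ denotes the polynomial with integer coefficients, of highest possible degree and smallest possible positive leading coefficient (in lexicographic ordering), dividing both $F$ and $G$ in the polynomial ring over $\mathbb{Q}$. *)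

From HB Require Import structures.
From mathcomp Require Import all_boot all_order all_algebra.
From mathcomp Require Import Rstruct.
Set Implicit Arguments. Unset Strict Implicit. Unset Printing Implicit Defensive.
Import Order.TTheory GRing.Theory Num.Theory.
Local Open Scope ring_scope.

(* Bivariate polynomials in Z[x,y] are represented as {poly {poly int}}:
   the outer variable 'X is x, the inner variable ('X)%:P is y. *)

Definition polyQ (p : {poly int}) : {poly rat} := map_poly (fun z : int => z%:~R) p.
Definition poly2Q (P : {poly {poly int}}) : {poly {poly rat}} := map_poly polyQ P.

Definition dvd2 (D P : {poly {poly int}}) : Prop :=
  exists Q : {poly {poly rat}}, poly2Q P = Q * poly2Q D.

(* total degree of a bivariate polynomial (0 for the zero polynomial) *)
Definition totdeg2 (P : {poly {poly int}}) : nat :=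
  \max_(i < size P) (if nth (0%R : {poly int}) P i == 0%R then 0%N else (i + (size (nth (0%R : {poly int}) P i)).-1)%N).

(* leading coefficient for the lexicographic order with x > y *)
Definition lead2 (P : {poly {poly int}}) : int := lead_coef (lead_coef P).

Definition is_gcd2 (F G S : {poly {poly int}}) : Prop :=
  [/\ dvd2 S F, dvd2 S G,
      (forall D, dvd2 D F -> dvd2 D G -> (totdeg2 D <= totdeg2 S)%N),
      0 < lead2 S &
      (forall D, dvd2 D F -> dvd2 D G -> totdeg2 D = totdeg2 S ->
         0 < lead2 D -> lead2 S <= lead2 D)].

Definition is_gcd1 (F G s : {poly int}) : Prop :=
  [/\ polyQ s %| polyQ F, polyQ s %| polyQ G,
      (forall d, polyQ d %| polyQ F -> polyQ d %| polyQ G -> (size d <= size s)%N),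
      0 < lead_coef s &
      (forall d, polyQ d %| polyQ F -> polyQ d %| polyQ G -> size d = size s ->
         0 < lead_coef d -> lead_coef s <= lead_coef d)].

(* weighted homogenisation: y^w * p(x / y^tau) = sum_i p_i x^i y^(w - tau*i)
   (exact whenever tau * deg p <= w, which the hypotheses guarantee) *)
Definition homog (p : {poly int}) (tau w : nat) : {poly {poly int}} :=
  \sum_(i < size p) (p`_i *: 'X^(w - tau * i))%:P * 'X^i.

(* S(t,1) : specialise y := 1, x := t *)
Definition at_y1 (S : {poly {poly int}}) : {poly int} := map_poly (fun c => c.[1]) S.

Definition varsigma (ups m : nat) : nat := if ups == 1%N then (2 * m)%N else 1%N.

From HB Require Import structures.
From mathcomp Require Import all_boot all_order all_algebra.
From mathcomp Require Import Rstruct.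
From mathcomp Require Import zify.
Import Order.TTheory GRing.Theory Num.Theory.
Local Open Scope ring_scope.
Set Implicit Arguments. Unset Strict Implicit.

(* Substituting x := x y^tau turns y^w p(x / y^tau) into y^w p(x).  Hence every divisor
   of F = homog(f)^3 in Q[x,y] becomes, after this substitution, a divisor of
   y^(6v) f(x)^3, i.e. a product y^k s(x); since the degree condition makes F or G prime
   to y, the gcd S is the weighted homogenisation of s = S(x,1), and s divides f^3 and
   g^2.  Conversely every common divisor d of f^3 and g^2 homogenises to a common
   divisor of F and G.  The total degree is additive (it is the y-degree after x := x y),
   so the maximality of the total degree of S forces deg s = deg gcd(f^3, g^2); and the
   homogenisation of d has the leading coefficient of d, so the two normalisations of
   the gcd agree. *)

Section Univariate.
Variable R : idomainType.

Lemma mul_eq_monomial n (a b : {poly R}) c : c != 0 -> a * b = c *: 'X^n ->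
  exists k d, a = d *: 'X^k.
Proof.
elim: n a b => [|n IHn] a b c_neq0 ab.
  have /andP[/eqP a1 _] : (size a == 1%N) && (size b == 1%N).
    by rewrite -size_mul_eq1 ab expr0 alg_polyC size_polyC c_neq0.
  by exists 0%N, a`_0; rewrite expr0 alg_polyC; apply: size1_polyC; rewrite a1.
have X_neq0 : ('X : {poly R}) != 0 by rewrite polyX_eq0.
have ab_X : c *: 'X^(n.+1) = (c *: 'X^n) * 'X :> {poly R} by rewrite exprSr scalerAl.
have : root a 0 || root b 0.
  by rewrite !rootE -mulf_eq0 -hornerM ab hornerZ hornerXn expr0n mulr0.
case/orP => /factor_theorem[q]; rewrite subr0 => q_def; move: ab.
  rewrite q_def mulrAC ab_X => /(mulIf X_neq0)/IHn[//|k [d ->]].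
  by exists k.+1, d; rewrite exprSr scalerAl.
by rewrite q_def mulrA ab_X => /(mulIf X_neq0)/IHn; apply.
Qed.

Lemma leq_deg_exp (p : {poly R}) tau w n : (tau * (size p).-1 <= w)%N ->
  (tau * (size (p ^+ n)%R).-1 <= w * n)%N.
Proof. by move=> deg_p; rewrite size_exp mulnA leq_mul2r deg_p orbT. Qed.
End Univariate.

Section Bivariate.
Variable R : idomainType.
Implicit Types (P Q U V : {poly {poly R}}) (p q : {poly R}).

Definition whomog p (tau w : nat) : {poly {poly R}} :=
  \sum_(i < size p) (p`_i *: 'X^(w - tau * i))%:P * 'X^i.

Definition twist (k : nat) : {poly {poly R}} -> {poly {poly R}} :=
  comp_poly ('X * 'Y ^+ k).

Definition evalY (c : R) P : {poly R} := map_poly (horner_eval c) P.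

Definition totdeg P : nat :=
  \max_(i < size P)
    (if nth (0%R : {poly R}) P i == 0%R then 0%N
     else (i + (size (nth (0%R : {poly R}) P i)).-1)%N).

Lemma whomog_poly p tau w :
  whomog p tau w = \poly_(i < size p) (p`_i *: 'X^(w - tau * i)).
Proof. by rewrite poly_def; apply: eq_bigr => i _; rewrite mul_polyC. Qed.

Lemma coef_whomog p tau w i : (whomog p tau w)`_i = p`_i *: 'X^(w - tau * i).
Proof.
rewrite whomog_poly coef_poly.
by case: ltnP => // /(nth_default 0) ->; rewrite scale0r.
Qed.

Lemma size_whomog p tau w : size (whomog p tau w) = size p.
Proof.
have [->|p_neq0] := eqVneq p 0.
  by rewrite whomog_poly size_poly0 poly_def big_ord0 size_poly0.
rewrite whomog_poly size_poly_eq // scale_poly_eq0 negb_or -lead_coefE lead_coef_eq0.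
by rewrite p_neq0 monic_neq0 ?monicXn.
Qed.

Lemma whomog0 tau w : whomog 0 tau w = 0.
Proof. by apply/eqP; rewrite -size_poly_eq0 size_whomog size_poly0. Qed.

Lemma twist_poly k P : twist k P = \poly_(i < size P) (P`_i * 'X^(k * i)).
Proof.
rewrite /twist /= comp_polyE poly_def; apply: eq_bigr => i _.
by rewrite exprMn -exprM -rmorphXn mulrC mul_polyC scalerA.
Qed.

Lemma coef_twist k P i : (twist k P)`_i = P`_i * 'X^(k * i).
Proof.
rewrite twist_poly coef_poly.
by case: ltnP => // /(nth_default 0) ->; rewrite mul0r.
Qed.

Lemma twistM k : {morph twist k : P Q / P * Q}.
Proof. exact: rmorphM. Qed.

Lemma twistXn k P n : twist k (P ^+ n) = twist k P ^+ n.
Proof. exact: rmorphXn. Qed.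

Lemma twist_inj k : injective (twist k).
Proof.
move=> P Q /polyP eqPQ; apply/polyP => i; apply: (@mulIf _ ('X^(k * i))).
  by rewrite monic_neq0 ?monicXn.
by rewrite -!coef_twist eqPQ.
Qed.

Lemma size_twist k P : size (twist k P) = size P.
Proof.
have [->|P_neq0] := eqVneq P 0.
  by rewrite twist_poly size_poly0 poly_def big_ord0 size_poly0.
rewrite twist_poly size_poly_eq // mulf_neq0 ?(monic_neq0 (monicXn _ _)) //.
by rewrite -lead_coefE lead_coef_eq0.
Qed.

Lemma twist_whomog p tau w : (tau * (size p).-1 <= w)%N ->
  twist tau (whomog p tau w) = 'Y ^+ w * p^:P.
Proof.
move=> deg_le; apply/polyP => i.
rewrite coef_twist coef_whomog -rmorphXn coefCM coef_map /=.
have [lt_i_p|/(nth_default 0)->] := ltnP i (size p); last first.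
  by rewrite scale0r mul0r mulr0.
have le_i : (tau * i <= w)%N by apply: leq_trans deg_le; rewrite leq_mul2l; lia.
by rewrite -scalerAl -exprD subnK // mulrC mul_polyC.
Qed.

Lemma whomogM p q tau a b :
  (tau * (size p).-1 <= a)%N -> (tau * (size q).-1 <= b)%N ->
  whomog p tau a * whomog q tau b = whomog (p * q) tau (a + b).
Proof.
move=> deg_p deg_q; apply: (@twist_inj tau).
have deg_pq : (tau * (size (p * q)%R).-1 <= a + b)%N.
  apply: leq_trans (_ : tau * ((size p).-1 + (size q).-1) <= a + b)%N; last by lia.
  by rewrite leq_mul2l; have := size_polyMleq p q; lia.
by rewrite twistM !twist_whomog // rmorphM exprD mulrACA.
Qed.

Lemma whomogXn p tau w n : (tau * (size p).-1 <= w)%N ->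
  whomog p tau w ^+ n = whomog (p ^+ n) tau (w * n).
Proof.
move=> deg_p; apply: (@twist_inj tau).
by rewrite twistXn !twist_whomog ?leq_deg_exp // exprMn -exprM rmorphXn.
Qed.

Lemma evalYM c : {morph evalY c : P Q / P * Q}.
Proof. exact: rmorphM. Qed.

Lemma evalY1_twist k P : evalY 1 (twist k P) = evalY 1 P.
Proof.
apply/polyP => i; rewrite !coef_map /= coef_twist /horner_eval.
by rewrite hornerM hornerXn expr1n mulr1.
Qed.

Lemma evalY1_whomog p tau w : evalY 1 (whomog p tau w) = p.
Proof.
apply/polyP => i; rewrite coef_map /= coef_whomog /horner_eval.
by rewrite hornerZ hornerXn expr1n mulr1.
Qed.

Lemma evalY1_Ymonomial k p : evalY 1 ('Y ^+ k * p^:P) = p.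
Proof.
apply/polyP => i; rewrite coef_map -rmorphXn coefCM coef_map /= /horner_eval.
by rewrite hornerM hornerXn expr1n mul1r hornerC.
Qed.

Lemma evalY0_whomog_neq0 p tau : p != 0 ->
  evalY 0 (whomog p tau (tau * (size p).-1)) != 0.
Proof.
move=> p_neq0; apply: contraNneq p_neq0 => /polyP/(_ (size p).-1).
rewrite coef_map coef_whomog subnn expr0 alg_polyC /= /horner_eval hornerC coef0.
by rewrite -lead_coefE => /eqP; rewrite lead_coef_eq0.
Qed.

Lemma evalY0_whomog p tau w : (tau * (size p).-1 < w)%N -> evalY 0 (whomog p tau w) = 0.
Proof.
move=> deg_lt; apply/polyP => i; rewrite coef_map /= coef_whomog coef0 /horner_eval.
have [lt_i_p|/(nth_default 0)->] := ltnP i (size p); last by rewrite scale0r horner0.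
have w_gt : (tau * i < w)%N by apply: leq_ltn_trans deg_lt; rewrite leq_mul2l; lia.
by rewrite hornerZ hornerXn expr0n subn_eq0 leqNgt w_gt mulr0.
Qed.

Lemma lead_coef2_whomog p tau :
  lead_coef (lead_coef (whomog p tau (tau * (size p).-1))) = lead_coef p.
Proof.
rewrite [lead_coef (whomog _ _ _)]lead_coefE size_whomog coef_whomog subnn expr0.
by rewrite alg_polyC lead_coefC.
Qed.

Lemma totdeg_sizeY P : totdeg P = (sizeY (twist 1 P)).-1.
Proof.
rewrite /totdeg /sizeY size_twist.
rewrite (big_morph predn (id1 := 0%N) (op1 := maxn)) //; last first.
  by move=> m n; rewrite /maxn; case: ltnP => lt_mn; case: ltnP => lt_mn'; lia.
apply: eq_bigr => i _; rewrite coef_twist mul1n.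
have [->|Pi_neq0] := eqVneq P`_i 0; first by rewrite mul0r size_poly0.
by rewrite size_mulXn // [in RHS](polySpred Pi_neq0) addnS.
Qed.

Lemma sizeY_mul U V : U != 0 -> V != 0 -> sizeY (U * V) = (sizeY U + sizeY V).-1.
Proof. by move=> U_neq0 V_neq0; rewrite !sizeYE rmorphM size_mul ?swapXY_eq0. Qed.

Lemma totdegM P Q : P != 0 -> Q != 0 -> totdeg (P * Q) = (totdeg P + totdeg Q)%N.
Proof.
have twist_neq0 U : U != 0 -> twist 1 U != 0 by rewrite -!size_poly_eq0 size_twist.
move=> /twist_neq0 P_neq0 /twist_neq0 Q_neq0.
rewrite !totdeg_sizeY twistM sizeY_mul //.
by move: P_neq0 Q_neq0; rewrite -!sizeY_eq0; lia.
Qed.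

Lemma leq_size_totdeg P : ((size P).-1 <= totdeg P)%N.
Proof.
have [->|P_neq0] := eqVneq P 0; first by rewrite size_poly0.
have lt_deg_P : ((size P).-1 < size P)%N by rewrite prednK ?size_poly_gt0.
apply: leq_trans (leq_bigmax (Ordinal lt_deg_P)) => /=.
by rewrite -lead_coefE lead_coef_eq0 (negbTE P_neq0) leq_addr.
Qed.

Lemma mul_eq_Ymonomial U V a w : a != 0 -> U * V = 'Y ^+ w * a^:P ->
  exists k, U = 'Y ^+ k * (evalY 1 U)^:P.
Proof.
move=> a_neq0 UV.
have : swapXY U * swapXY V = a *: 'X^w.
  by rewrite -rmorphM UV rmorphM /= rmorphXn /= swapXY_Y swapXY_map_polyC mulrC mul_polyC.
case/(mul_eq_monomial a_neq0) => k [d swapU].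
have -> : U = 'Y ^+ k * d^:P.
  by rewrite -[U]swapXYK swapU -mul_polyC rmorphM /= swapXY_polyC rmorphXn /= swapXY_X mulrC.
by exists k; rewrite evalY1_Ymonomial.
Qed.

Lemma twist_eq_Ymonomial tau k P s : twist tau P = 'Y ^+ k * s^:P ->
  (tau * (size s).-1 <= k)%N.
Proof.
have [->|s_neq0] := eqVneq s 0; first by rewrite size_poly0 muln0.
move=> /polyP/(_ (size s).-1).
rewrite coef_twist -rmorphXn coefCM coef_map /= -lead_coefE.
have [->|Pn_neq0] := eqVneq P`_(size s).-1 0.
  rewrite mul0r => /esym/eqP; rewrite mulf_eq0 polyC_eq0 lead_coef_eq0 (negbTE s_neq0).
  by rewrite orbF (negbTE (monic_neq0 (monicXn _ _))).
move=> /(congr1 (fun q : {poly R} => size q)) /=.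
rewrite size_mulXn // mulrC mul_polyC size_scale ?lead_coef_eq0 // size_polyXn => sz_eq.
by rewrite -ltnS -sz_eq -addn1 leq_add2l size_poly_gt0.
Qed.

Lemma twist_eq_whomog tau k P s : twist tau P = 'Y ^+ k * s^:P -> P = whomog s tau k.
Proof.
move=> twP; apply: (@twist_inj tau).
by rewrite twP twist_whomog // (twist_eq_Ymonomial twP).
Qed.

Lemma whomog_factor S Q a tau : a != 0 ->
  S * Q = whomog a tau (tau * (size a).-1) ->
  S = whomog (evalY 1 S) tau (tau * (size (evalY 1 S)).-1).
Proof.
move=> a_neq0 SQ; set s := evalY 1 S.
have twSQ : twist tau S * twist tau Q = 'Y ^+ (tau * (size a).-1) * a^:P.
  by rewrite -twistM SQ twist_whomog.
have [k] := mul_eq_Ymonomial a_neq0 twSQ; rewrite evalY1_twist -/s => twS.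
have S_def := twist_eq_whomog twS.
(* a larger k would make y divide S, but y does not divide [whomog a tau (tau * deg a)] *)
suff -> : (tau * (size s).-1)%N = k by [].
apply/eqP; rewrite eqn_leq (twist_eq_Ymonomial twS) leqNgt /=; apply/negP => lt_k.
have := evalY0_whomog_neq0 tau a_neq0.
by rewrite -SQ evalYM S_def evalY0_whomog // mul0r eqxx.
Qed.

End Bivariate.

Section FieldCoefficients.
Variable K : fieldType.
Implicit Types (S Q : {poly {poly K}}) (a d p : {poly K}).

Lemma whomog_divp d a tau w : d %| a -> (tau * (size a).-1 <= w)%N ->
  whomog a tau w =
  whomog (a %/ d) tau (w - tau * (size d).-1) * whomog d tau (tau * (size d).-1).
Proof.
have [->|a_neq0] := eqVneq a 0; first by rewrite div0p !whomog0 mul0r.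
move=> dvd_da deg_a; have a_def : a = a %/ d * d by rewrite divpK.
have r_neq0 : a %/ d != 0 by apply: contraNneq a_neq0 => r0; rewrite a_def r0 mul0r.
have d_neq0 : d != 0 by apply: contraNneq a_neq0 => d0; rewrite a_def d0 mulr0.
have deg_a_eq : (size a).-1 = ((size (a %/ d)%R).-1 + (size d).-1)%N.
  by rewrite {1}a_def size_mul // (polySpred r_neq0) (polySpred d_neq0) addSn addnS.
have deg_d : (tau * (size d).-1 <= w)%N.
  by apply: leq_trans deg_a; rewrite deg_a_eq mulnDr leq_addl.
by rewrite whomogM -?a_def ?subnK // leq_subRL // -mulnDr addnC -deg_a_eq.
Qed.

Lemma totdeg_whomog_dvdp p d tau : p %| d -> d != 0 ->
  (totdeg (whomog p tau (tau * (size p).-1)) + (size d - size p)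
     <= totdeg (whomog d tau (tau * (size d).-1)))%N.
Proof.
move=> dvd_pd d_neq0; have d_def : d = d %/ p * p by rewrite divpK.
have r_neq0 : d %/ p != 0 by apply: contraNneq d_neq0 => r0; rewrite d_def r0 mul0r.
have p_neq0 : p != 0 by apply: contraNneq d_neq0 => p0; rewrite d_def p0 mulr0.
have whomog_neq0 q w : q != 0 -> whomog q tau w != 0.
  by rewrite -!size_poly_eq0 size_whomog.
rewrite (whomog_divp dvd_pd) // totdegM ?whomog_neq0 // addnC leq_add2r.
apply: leq_trans (leq_size_totdeg _); rewrite size_whomog {1}d_def size_mul //.
by rewrite (polySpred r_neq0) (polySpred p_neq0); lia.
Qed.

Lemma evalY1_dvdp S Q a tau w : S * Q = whomog a tau w -> evalY 1 S %| a.
Proof.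
by move=> /(congr1 (evalY 1)); rewrite evalYM evalY1_whomog => <-; apply: dvdp_mulIl.
Qed.

End FieldCoefficients.

Section IntegerCoefficients.
Implicit Types (p d : {poly int}) (P S : {poly {poly int}}).

Lemma polyQ_inj : injective polyQ.
Proof. exact: map_inj_poly (@intr_inj _) _. Qed.

Lemma size_polyQ p : size (polyQ p) = size p.
Proof. exact: size_map_inj_poly (@intr_inj _) _ _. Qed.

Lemma polyQ_eq0 p : (polyQ p == 0) = (p == 0).
Proof. by rewrite -!size_poly_eq0 size_polyQ. Qed.

Lemma lead_coef_polyQ p : lead_coef (polyQ p) = (lead_coef p)%:~R.
Proof. exact: lead_coef_map_inj (@intr_inj _) _ _. Qed.

Lemma size_poly2Q P : size (poly2Q P) = size P.
Proof. exact: (size_map_inj_poly polyQ_inj (map_poly0 _)). Qed.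

Lemma coef_poly2Q P i : (poly2Q P)`_i = polyQ P`_i.
Proof. by rewrite coef_map_id0 // /polyQ map_poly0. Qed.

Lemma totdeg2_poly2Q P : totdeg2 P = totdeg (poly2Q P).
Proof.
rewrite /totdeg2 /totdeg size_poly2Q; apply: eq_bigr => i _.
by rewrite coef_poly2Q polyQ_eq0 size_polyQ.
Qed.

Lemma lead2_poly2Q P : (lead2 P)%:~R = lead_coef (lead_coef (poly2Q P)) :> rat.
Proof.
rewrite /lead2 lead_coef_map_inj ?lead_coef_polyQ //; first exact: polyQ_inj.
by rewrite /polyQ map_poly0.
Qed.

Lemma poly2Q_homog p tau w : poly2Q (homog p tau w) = whomog (polyQ p) tau w.
Proof.
apply/polyP => i; rewrite coef_poly2Q.
by rewrite -[homog p tau w]/(whomog p tau w) !coef_whomog /polyQ map_polyZ map_polyXn coef_map.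
Qed.

Lemma poly2Q_homogXn p tau w n : (tau * (size p).-1 <= w)%N ->
  poly2Q (homog p tau w ^+ n) = whomog (polyQ (p ^+ n)) tau (w * n).
Proof.
move=> deg_p; have -> : poly2Q (homog p tau w ^+ n) = poly2Q (homog p tau w) ^+ n.
  exact: rmorphXn.
by rewrite poly2Q_homog whomogXn ?size_polyQ // /polyQ rmorphXn.
Qed.

Lemma polyQ_at_y1 S : polyQ (at_y1 S) = evalY 1 (poly2Q S).
Proof.
apply/polyP => i; rewrite [in RHS]coef_map /= coef_poly2Q !coef_map_id0 ?horner0 //.
by rewrite /horner_eval -[1 in RHS](rmorph1 intr) horner_map.
Qed.

Lemma lead2_homog d tau : lead2 (homog d tau (tau * (size d).-1)) = lead_coef d.
Proof.
apply: (@intr_inj rat); rewrite lead2_poly2Q poly2Q_homog -(size_polyQ d).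
by rewrite lead_coef2_whomog lead_coef_polyQ.
Qed.

Lemma homog_dvd2 P p d tau w :
  poly2Q P = whomog (polyQ p) tau w -> (tau * (size p).-1 <= w)%N ->
  polyQ d %| polyQ p -> dvd2 (homog d tau (tau * (size d).-1)) P.
Proof.
move=> P_def deg_p dvd_dp; rewrite /dvd2 P_def poly2Q_homog -(size_polyQ d).
by rewrite (whomog_divp dvd_dp) ?size_polyQ //; eexists.
Qed.

End IntegerCoefficients.

Section GcdTransfer.
Variables (f g : {poly int}) (F G S : {poly {poly int}}) (tau w : nat).
Hypotheses (F_def : poly2Q F = whomog (polyQ f) tau w)
           (G_def : poly2Q G = whomog (polyQ g) tau w).
Hypotheses (deg_f : (tau * (size f).-1 <= w)%N) (deg_g : (tau * (size g).-1 <= w)%N).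
Hypothesis deg_fg_eq :
  (f != 0) && (tau * (size f).-1 == w)%N || (g != 0) && (tau * (size g).-1 == w)%N.
Hypothesis gcdS : is_gcd2 F G S.

Let s := evalY 1 (poly2Q S).

Lemma gcd2_mul_eq_f : exists Q, poly2Q S * Q = whomog (polyQ f) tau w.
Proof. by have [[Q dvdSF] _ _ _ _] := gcdS; exists Q; rewrite [_ * Q]mulrC -dvdSF. Qed.

Lemma gcd2_mul_eq_g : exists Q, poly2Q S * Q = whomog (polyQ g) tau w.
Proof. by have [_ [Q dvdSG] _ _ _] := gcdS; exists Q; rewrite [_ * Q]mulrC -dvdSG. Qed.

Lemma gcd2_whomog : poly2Q S = whomog s tau (tau * (size s).-1).
Proof.
case/orP: deg_fg_eq => /andP[p_neq0 /eqP deg_eq].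
  have [Q] := gcd2_mul_eq_f; rewrite -deg_eq -(size_polyQ f).
  by apply: whomog_factor; rewrite polyQ_eq0.
have [Q] := gcd2_mul_eq_g; rewrite -deg_eq -(size_polyQ g).
by apply: whomog_factor; rewrite polyQ_eq0.
Qed.

Lemma gcd2_dvdp_f : s %| polyQ f.
Proof. by have [Q /evalY1_dvdp] := gcd2_mul_eq_f. Qed.

Lemma gcd2_dvdp_g : s %| polyQ g.
Proof. by have [Q /evalY1_dvdp] := gcd2_mul_eq_g. Qed.

Lemma totdeg2_common_divisor d : polyQ d %| polyQ f -> polyQ d %| polyQ g ->
  s %| polyQ d -> d != 0 ->
  (totdeg2 S + (size d - size s)
     <= totdeg2 (homog d tau (tau * (size d).-1)) <= totdeg2 S)%N.
Proof.
move=> dvd_df dvd_dg dvd_sd d_neq0; have [_ _ max_S _ _] := gcdS.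
have -> : (totdeg2 (homog d tau (tau * (size d).-1)) <= totdeg2 S)%N.
  by apply: max_S; [apply: (homog_dvd2 F_def) | apply: (homog_dvd2 G_def)].
rewrite andbT !totdeg2_poly2Q gcd2_whomog poly2Q_homog -(size_polyQ d).
by apply: totdeg_whomog_dvdp; rewrite ?polyQ_eq0.
Qed.

Let g0 := gcdp (polyQ f) (polyQ g).

Lemma gcdp_fg_neq0 : g0 != 0.
Proof.
by rewrite gcdp_eq0 !polyQ_eq0 negb_and; case/orP: deg_fg_eq => /andP[-> _]; rewrite ?orbT.
Qed.

Lemma gcd2_eqp_gcdp : s %= g0.
Proof.
have dvd_s_g0 : s %| g0 by rewrite dvdp_gcd gcd2_dvdp_f gcd2_dvdp_g.
rewrite -dvdp_size_eqp // eqn_leq dvdp_leq ?gcdp_fg_neq0 //=.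
have [d0 [c c_neq0 g0_def]] := rat_poly_scale g0.
have d0_def : polyQ d0 = c%:~R *: g0 by rewrite g0_def scalerA mulfV ?scale1r ?intr_eq0.
have dvd_d0 q : g0 %| q -> polyQ d0 %| q by rewrite d0_def dvdpZl ?intr_eq0.
have d0_neq0 : d0 != 0.
  by rewrite -polyQ_eq0 d0_def scaler_eq0 intr_eq0 negb_or c_neq0 gcdp_fg_neq0.
have dvd_s_d0 : s %| polyQ d0 by rewrite d0_def dvdpZr ?intr_eq0.
have := totdeg2_common_divisor (dvd_d0 _ (dvdp_gcdl _ _)) (dvd_d0 _ (dvdp_gcdr _ _)).
move=> /(_ dvd_s_d0 d0_neq0) /andP[lb ub].
move: (leq_trans lb ub); rewrite -(size_polyQ d0) d0_def size_scale ?intr_eq0 //.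
by rewrite -[X in (_ <= X)%N]addn0 leq_add2l leqn0 subn_eq0.
Qed.

Lemma lead2_at_y1 : lead2 S = lead_coef (at_y1 S).
Proof.
apply: (@intr_inj rat); rewrite lead2_poly2Q gcd2_whomog lead_coef2_whomog.
by rewrite -lead_coef_polyQ polyQ_at_y1.
Qed.

Lemma is_gcd1_at_y1 : is_gcd1 f g (at_y1 S).
Proof.
have [_ _ _ lead_S_gt0 min_lead_S] := gcdS.
have s_def : polyQ (at_y1 S) = s := polyQ_at_y1 S.
have size_at_y1 : size (at_y1 S) = size g0.
  by rewrite -size_polyQ s_def (eqp_size gcd2_eqp_gcdp).
have dvd_g0 d : polyQ d %| polyQ f -> polyQ d %| polyQ g -> polyQ d %| g0.
  by move=> dvd_df dvd_dg; rewrite dvdp_gcd dvd_df.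
split.
- by rewrite s_def gcd2_dvdp_f.
- by rewrite s_def gcd2_dvdp_g.
- move=> d dvd_df dvd_dg; rewrite size_at_y1 -(size_polyQ d).
  exact: dvdp_leq gcdp_fg_neq0 (dvd_g0 d dvd_df dvd_dg).
- by rewrite -lead2_at_y1.
move=> d dvd_df dvd_dg size_d lead_d_gt0.
have d_neq0 : d != 0 by rewrite -lead_coef_eq0 gt_eqF.
have d_eqp : polyQ d %= g0.
  by rewrite -dvdp_size_eqp ?dvd_g0 // size_polyQ size_d size_at_y1.
have dvd_sd : s %| polyQ d.
  by rewrite (eqp_dvdl _ gcd2_eqp_gcdp) (eqp_dvdr _ d_eqp) dvdpp.
have /andP[lb ub] := totdeg2_common_divisor dvd_df dvd_dg dvd_sd d_neq0.
rewrite -lead2_at_y1 -(lead2_homog d tau); apply: min_lead_S; rewrite ?lead2_homog //.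
- exact: homog_dvd2 F_def deg_f dvd_df.
- exact: homog_dvd2 G_def deg_g dvd_dg.
by apply/eqP; rewrite eqn_leq ub (leq_trans (leq_addr _ _) lb).
Qed.

End GcdTransfer.

Lemma ler_nat_ratio (x c N K : nat) : (0 < c)%N -> (0 < K)%N ->
  (x%:R / c%:R <= N%:R / K%:R :> rat) = (x * K <= N * c)%N.
Proof.
move=> c_gt0 K_gt0.
by rewrite ler_pdivrMr ?ltr0n // mulrAC ler_pdivlMr ?ltr0n // -!natrM ler_nat.
Qed.

Lemma max_ratio_eq (a b N K : nat) : (0 < K)%N -> (0 < N)%N ->
  Num.max (a%:R / 2 : rat) (b%:R / 3) = N%:R / K%:R ->
  [/\ (K * a <= 2 * N)%N, (K * b <= 3 * N)%N &
      (0 < a)%N && (K * a == 2 * N)%N || (0 < b)%N && (K * b == 3 * N)%N].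
Proof.
move=> K_gt0 N_gt0 max_eq.
have : Num.max (a%:R / 2 : rat) (b%:R / 3) <= N%:R / K%:R by rewrite max_eq.
rewrite ge_max !ler_nat_ratio // => /andP[le_a le_b].
have : (a%:R / 2 == N%:R / K%:R :> rat) || (b%:R / 3 == N%:R / K%:R :> rat).
  by rewrite -max_eq; case: leP => _; rewrite eqxx ?orbT.
rewrite !eq_le !ler_nat_ratio // => eq_cases; split; [lia | lia |].
by case/orP: eq_cases => /andP[_ ge]; apply/orP; [left | right]; apply/andP; split; lia.
Qed.

Lemma varsigma_ratio ups m tau : (ups = 1 \/ ups = 2)%N -> (m = 1 \/ ups * tau = 1)%N ->
  (2 * m)%:R / (ups * tau)%:R = (varsigma ups m)%:R / tau%:R :> rat.
Proof.
case=> -> m_ups_tau; first by rewrite mul1n.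
have -> : m = 1%N by case: m_ups_tau => //; lia.
by rewrite /varsigma /= muln1 natrM invfM mulrA mulfV ?pnatr_eq0.
Qed.

Unset Implicit Arguments.
Theorem lemma2p2 (ups m tau : nat) (f g : {poly int}) (S : {poly {poly int}}) :
  (ups = 1 \/ ups = 2)%N ->
  (0 < m)%N -> (0 < tau)%N ->
  (m = 1 \/ ups * tau = 1)%N ->
  4%:R * f ^+ 3 + 27%:R * g ^+ 2 != 0 ->
  (forall r : Rdefinitions.R,
     ~ (root (map_poly (fun z : int => z%:~R) f) r /\
        root (map_poly (fun z : int => z%:~R) g) r)) ->
  Num.max ((size f).-1%:R / 2 : rat) ((size g).-1%:R / 3) = (2 * m)%:R / (ups * tau)%:R ->
  is_gcd2 (homog f tau (2 * varsigma ups m) ^+ 3) (homog g tau (3 * varsigma ups m) ^+ 2) S ->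
  is_gcd1 (f ^+ 3) (g ^+ 2) (at_y1 S).
Proof.
move=> ups12 m_gt0 tau_gt0 m_ups_tau _ _ deg_max gcdS.
set v := varsigma ups m in gcdS deg_max.
have v_gt0 : (0 < v)%N by rewrite /v /varsigma; case: ifP; lia.
rewrite varsigma_ratio // in deg_max.
have [deg_f deg_g deg_eq] := max_ratio_eq tau_gt0 v_gt0 deg_max.
have sixv : (3 * v * 2 = 2 * v * 3)%N by lia.
apply: (is_gcd1_at_y1 (tau := tau) (w := (2 * v * 3)%N) _ _ _ _ _ gcdS).
- exact: poly2Q_homogXn.
- by rewrite poly2Q_homogXn // sixv.
- exact: leq_deg_exp.
- by rewrite -sixv; apply: leq_deg_exp.
have exp_neq0 (p : {poly int}) n : (0 < (size p).-1)%N -> p ^+ n != 0.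
  by move=> deg_pos; apply: expf_neq0; rewrite -size_poly_gt0 (leq_trans deg_pos) ?leq_pred.
case/orP: deg_eq => /andP[deg_pos /eqP deg_eq]; apply/orP; [left | right].
  by rewrite exp_neq0 // size_exp mulnA deg_eq eqxx.
by rewrite exp_neq0 // size_exp mulnA deg_eq sixv eqxx.
Qed.
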